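(* Let $\Gamma_1$ be the path graph with vertices $a,b,c,d$ and edges $\{a,b\},\{b,c\},\{c,d\}$. Then $\vdash_{\Gamma_1} a\rhd d\rightarrow b,c\rhd d$.
   Context: For a finite simple undirected graph $\Gamma=(V,E)$, the border of $U\subseteq V$ is ${\cal B}(U)=\{v\in U\mid (v,w)\in E\text{ for some }w\in V\setminus U\}$, and a cut $(U,W)$ is a partition $V=U\sqcup W$. Formulas are built from $\bot$, atoms $A\rhd B$ ($A,B\subseteq V$) and $\rightarrow$; $A,B$ denotes $A\cup B$ and a vertex $v$ stands for $\{v\}$. $\vdash_\Gamma\phi$ means $\phi$ is derivable by Modus Ponens from propositional tautologies and the axioms: Reflexivity $A\rhd B$ for $B\subseteq A$; Augmentation $A\rhd B\rightarrow A,C\rhd B,C$; Transitivity $A\rhd B\rightarrow(B\rhd C\rightarrow A\rhd C)$; Contiguity $A,B\rhd C\rightarrow{\cal B}(U),{\cal B}(W),B\rhd C$ for every cut $(U,W)$ of $\Gamma$ with $A\subseteq U$, $C\subseteq W$. *)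

From mathcomp Require Import all_boot.
Set Implicit Arguments. Unset Strict Implicit. Unset Printing Implicit Defensive.

Inductive formula (T : finType) : Type :=
| Bot : formula T
| Atom : {set T} -> {set T} -> formula T
| Imp : formula T -> formula T -> formula T.
Arguments Bot {T}.

Fixpoint feval (T : finType) (val : {set T} -> {set T} -> bool) (f : formula T) : bool :=
  match f with
  | Bot => false
  | Atom A B => val A B
  | Imp f g => feval val f ==> feval val g
  end.

Definition tautology (T : finType) (f : formula T) : Prop :=
  forall val : {set T} -> {set T} -> bool, feval val f.

Definition border (T : finType) (e : rel T) (U : {set T}) : {set T} :=
  [set v in U | [exists w, (w \notin U) && e v w]].

(* Derivability in the logic of the graph (T, e). A cut (U, W) is a partition
   V = U ⊔ W, i.e. W = ~: U. *)
Inductive derivable (T : finType) (e : rel T) : formula T -> Prop :=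
| D_taut : forall f, tautology f -> derivable e f
| D_mp : forall f g, derivable e (Imp f g) -> derivable e f -> derivable e g
| D_refl : forall A B : {set T}, B \subset A -> derivable e (Atom A B)
| D_aug : forall A B C : {set T},
    derivable e (Imp (Atom A B) (Atom (A :|: C) (B :|: C)))
| D_trans : forall A B C : {set T},
    derivable e (Imp (Atom A B) (Imp (Atom B C) (Atom A C)))
| D_contig : forall A B C U W : {set T},
    W = ~: U -> A \subset U -> C \subset W ->
    derivable e (Imp (Atom (A :|: B) C)
                     (Atom (border e U :|: border e W :|: B) C)).

(* The path graph Γ1 on vertices a=0, b=1, c=2, d=3 with edges ab, bc, cd. *)
Definition path4_edge : rel 'I_4 :=
  fun i j => (i.+1 == j :> nat) || (j.+1 == i :> nat).

Definition va : 'I_4 := @Ordinal 4 0 erefl.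
Definition vb : 'I_4 := @Ordinal 4 1 erefl.
Definition vc : 'I_4 := @Ordinal 4 2 erefl.
Definition vd : 'I_4 := @Ordinal 4 3 erefl.

From mathcomp Require Import all_boot.

(* A single instance of Contiguity suffices: the cut ({a, b}, {c, d}) separates
   a from d, and its two borders are {b} and {c}. *)

Lemma derivable_contig_cut (T : finType) (e : rel T) (A C U : {set T}) :
  A \subset U -> C \subset ~: U ->
  derivable e (Imp (Atom A C) (Atom (border e U :|: border e (~: U)) C)).
Proof.
move=> sAU sCW.
have := @D_contig _ e A set0 C U (~: U) erefl sAU sCW.
by rewrite !setU0.
Qed.

Lemma path4_cut_borders :
  border path4_edge [set va; vb] :|: border path4_edge (~: [set va; vb])
  = [set vb; vc].
Proof.
apply/setP => i; rewrite /border !inE.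
case: i => [[|[|[|[|n]]]] Hi] //=; rewrite ?orbF.
- by apply/existsP => -[[[|[|[|[|m]]]] Hm]]; rewrite !inE.
- by apply/existsP; exists vc; rewrite !inE.
- by apply/existsP; exists vb; rewrite !inE.
- by apply/existsP => -[[[|[|[|[|m]]]] Hm]]; rewrite !inE.
Qed.

Theorem proposition1 :
  derivable path4_edge
    (Imp (Atom [set va] [set vd]) (Atom [set vb; vc] [set vd])).
Proof.
rewrite -path4_cut_borders.
by apply: derivable_contig_cut; rewrite sub1set !inE.
Qed.
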